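(* Let $G$ be a graph of tree-width $k\geq 3$. Then the minor-3-core of $G$ also has tree-width $k$.
   Context: Graphs are simple and undirected. A minor of $G$ is a graph obtained from $G$ by vertex contractions (contracting a vertex $u$ into a neighbour $v$, i.e. an edge contraction keeping the name $v$) and subgraph operations. A minor-3-core of $G$ is a minor $H$ of $G$ with minimum degree at least $3$ such that no minor of $G$ with minimum degree at least $3$ has more edges than $H$; all minor-3-cores of $G$ are isomorphic, so one speaks of the minor-3-core. Equivalently, it is the graph obtained by repeatedly contracting a vertex of degree at most $2$ into a neighbour and deleting isolated vertices until neither operation applies. *)

From Stdlib Require Import Relation_Operators.
From mathcomp Require Import all_boot.
Set Implicit Arguments. Unset Strict Implicit. Unset Printing Implicit Defensive.

Record graph (T : finType) := Graph { gV : {set T}; gE : rel T }.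

Section Graphs.
Variable T : finType.
Implicit Types (G H : graph T) (x y u v : T).

Definition wf_graph G : Prop :=
  [/\ symmetric (gE G), irreflexive (gE G) &
      forall x y, gE G x y -> (x \in gV G) && (y \in gV G)].

Definition nedges G : nat :=
  #|[set e : {set T} | [exists x, exists y, (e == [set x; y]) && gE G x y]]|.

Definition deg G v : nat := #|[set u | gE G v u]|.

Definition mindeg_ge3 G : Prop := forall v, v \in gV G -> 3 <= deg G v.

Definition del_vertex G x : graph T :=
  Graph (gV G :\ x) [rel a b | [&& gE G a b, a != x & b != x]].

Definition del_edge G x y : graph T :=
  Graph (gV G) [rel a b | gE G a b &&
                 ~~ (((a == x) && (b == y)) || ((a == y) && (b == x)))].

(* contract vertex u into its neighbour v, keeping the name v *)
Definition contract G u v : graph T :=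
  Graph (gV G :\ u)
    [rel a b | [&& a != u, b != u, a != b &
       [|| gE G a b, (a == v) && gE G u b | (b == v) && gE G a u]]].

Inductive minor_step G : graph T -> Prop :=
| MS_del_vertex x : x \in gV G -> minor_step G (del_vertex G x)
| MS_del_edge x y : gE G x y -> minor_step G (del_edge G x y)
| MS_contract u v : gE G u v -> minor_step G (contract G u v).

Definition minor G H : Prop := clos_refl_trans (graph T) minor_step G H.

Definition minor3core G H : Prop :=
  [/\ minor G H, mindeg_ge3 H &
      forall H', minor G H' -> mindeg_ge3 H' -> nedges H' <= nedges H].

End Graphs.

Definition is_tree (I : finType) (tE : rel I) : Prop :=
  [/\ symmetric tE, irreflexive tE, 0 < #|I|,
      forall i j, connect tE i j &
      forall c : seq I, uniq c -> 2 < size c -> ~~ cycle tE c].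

Definition has_tw_le (T : finType) (G : graph T) (k : nat) : Prop :=
  exists (I : finType) (tE : rel I) (B : I -> {set T}),
  [/\ is_tree tE /\ (forall i, B i \subset gV G),
      forall x, x \in gV G -> exists i, x \in B i,
      forall x y, gE G x y -> exists i, (x \in B i) && (y \in B i),
      forall x i j, x \in B i -> x \in B j ->
         connect [rel a b | [&& tE a b, x \in B a & x \in B b]] i j &
      forall i, #|B i| <= k.+1].

Definition treewidth (T : finType) (G : graph T) (k : nat) : Prop :=
  has_tw_le G k /\ forall j, has_tw_le G j -> k <= j.

(* The 3-core H is a minor of G, so tw H <= tw G.  Conversely, fix a model of
   H in G (branch sets X h) and repeatedly suppress a vertex w of degree at
   most 2 of G, by deleting it or contracting it into a neighbour: the sets
   X h minus w still form a model of H, because H has minimum degree 3 and so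
   no branch set is reduced to {w}; and a decomposition of the smaller graph
   of width m >= 2 extends to G by hanging the bag {w} + N(w) onto a bag
   containing N(w) (a clique of size at most 2 in the smaller graph).  When
   no such vertex is left, G has minimum degree 3, hence at most as many edges
   as H by maximality of H; counting edges then shows that every branch set is
   a single vertex, so G is isomorphic to a subgraph of H and tw G <= tw H.
   Hence k = tw G <= max (tw H) 2, and k >= 3 gives k <= tw H. *)

From mathcomp Require Import all_boot.
From Stdlib Require Import Relation_Operators.

Set Implicit Arguments. Unset Strict Implicit. Unset Printing Implicit Defensive.

Lemma connect_homo (A B : finType) (e : rel A) (e' : rel B) (f : A -> B) :
  (forall a b, e a b -> connect e' (f a) (f b)) ->
  forall x y, connect e x y -> connect e' (f x) (f y).
Proof.
move=> ef x y /connectP[p]; elim: p x => [|z p IHp] x /=; first by move=> _ ->.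
by case/andP=> exz pz ly; apply: connect_trans (ef _ _ exz) (IHp _ pz ly).
Qed.

Lemma connect_mono (A : finType) (e e' : rel A) :
  subrel e e' -> forall x y, connect e x y -> connect e' x y.
Proof. by move=> ee'; apply: connect_sub => x y /ee' /connect1. Qed.

Lemma connect_first (A : finType) (e : rel A) x y :
  connect e x y -> x != y -> exists2 z, e x z & connect e z y.
Proof.
case/connectP=> -[/= _ ->|z p /= /andP[exz pz] ly _]; first by rewrite eqxx.
by exists z => //; apply/connectP; exists p.
Qed.

Lemma connect_restrictU (I : finType) (e : rel I) (P Q : pred I) i0 :
    symmetric e -> P i0 -> Q i0 ->
    (forall i j, P i -> P j -> connect [rel a b | [&& e a b, P a & P b]] i j) ->
    (forall i j, Q i -> Q j -> connect [rel a b | [&& e a b, Q a & Q b]] i j) ->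
  forall i j, P i || Q i -> P j || Q j ->
  connect [rel a b | [&& e a b, P a || Q a & P b || Q b]] i j.
Proof.
move=> symE Pi0 Qi0 connP connQ; set R := [rel a b | _].
have to_i0 i : P i || Q i -> connect R i i0.
  case/orP=> [Pi|Qi].
    apply: connect_mono (connP _ _ Pi Pi0) => a b /and3P[ab Pa Pb].
    by rewrite /= ab Pa Pb.
  apply: connect_mono (connQ _ _ Qi Qi0) => a b /and3P[ab Qa Qb].
  by rewrite /= ab Qa Qb !orbT.
have symR : connect_sym R.
  by apply: sym_connect_sym => a b; rewrite /= (symE a b) (andbC (P a || Q a)).
by move=> i j PQi PQj; rewrite (connect_trans (to_i0 _ PQi)) // symR to_i0.
Qed.

Definition add_leaf (I : finType) (tE : rel I) (i0 : I) : rel (option I) :=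
  fun x y => match x, y with
  | Some i, Some j => tE i j
  | None, Some j => j == i0
  | Some i, None => i == i0
  | None, None => false
  end.

Lemma is_tree_add_leaf (I : finType) (tE : rel I) (i0 : I) :
  is_tree tE -> is_tree (add_leaf tE i0).
Proof.
case=> symE irrE _ connE acyclicE.
have symE' : symmetric (add_leaf tE i0) by case=> [i|] [j|] //=; apply: symE.
have to_i0 x : connect (add_leaf tE i0) x (Some i0).
  case: x => [i|]; last by apply: connect1; rewrite /= eqxx.
  by apply: connect_homo (connE i i0) => a b ab; apply: connect1.
split=> //; first by case=> [i|] //=; apply: irrE.
- by rewrite card_option.
- by move=> x y; rewrite (connect_trans (to_i0 x)) // (sym_connect_sym symE').
move=> c uc sc; apply/negP => cc.
have [Nc|Nc] := boolP (None \in c).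
  (* the leaf [None] has a single neighbour, so it cannot lie on a cycle *)
  case/rot_to: Nc => i s' e.
  move: uc sc cc; rewrite -(rot_uniq i) -(size_rot i) -(rot_cycle i) e.
  case: s' {e} => [|x1 [|y p]] // uc _.
  rewrite /cycle rcons_path /= => /andP[/andP[ex1 _] eN].
  have ex1' : x1 = Some i0 by case: x1 ex1 {uc} => [k /eqP ->|].
  have el : last y p = Some i0 by case: (last y p) eN => [k /eqP ->|].
  by move: uc; rewrite /= ex1' -el mem_last andbF.
have {}Nc : c = map Some (pmap id c).
  rewrite pmapS_filter map_id; symmetry; apply/all_filterP/allP => -[] //.
  by move/(negP Nc).
rewrite Nc (map_inj_uniq (@Some_inj _)) size_map cycle_map in uc sc cc.
by rewrite (negbTE (acyclicE _ uc sc)) in cc.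
Qed.

Section Graphs.
Variable T : finType.
Implicit Types (G H K : graph T) (X : T -> {set T}).

Lemma wf_minor_step G K : wf_graph G -> minor_step G K -> wf_graph K.
Proof.
case=> symG irrG inV; case=> [x _|x y _|u v uv].
- split=> [a b|a|a b] /=; first by rewrite symG (andbC (a != x)).
  + by rewrite irrG.
  + by case/and3P=> /inV /andP[aV bV] ax bx; rewrite !in_setD1 ax bx aV bV.
- split=> [a b|a|a b] /=; last by case/andP=> /inV.
  + by rewrite symG [(b == x) && _]andbC [(b == y) && _]andbC orbC.
  + by rewrite irrG.
- have /andP[uV vV] := inV _ _ uv.
  split=> [a b|a|a b] /=.
  + rewrite (symG b a) (symG u a) (symG u b) (eq_sym b a).
    case: (a != u); case: (b != u); case: (a != b) => //=.
    by rewrite (orbC ((b == v) && _)).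
  + by rewrite eqxx /= ?andbF.
  + case/and4P=> au bu _; rewrite !in_setD1 au bu /=.
    case/or3P=> [/inV //|/andP[/eqP-> /inV/andP[_ ->]]|/andP[/eqP-> /inV/andP[-> _]]];
    by rewrite vV.
Qed.

Lemma wf_minor G K : wf_graph G -> minor G K -> wf_graph K.
Proof.
by move=> wG m; elim: m wG => [x y st /wf_minor_step/(_ st)| | x y z _ IH1 _ IH2 /IH1/IH2].
Qed.

Lemma minor_closed (P : graph T -> Prop) :
  (forall G K, wf_graph G -> minor_step G K -> P G -> P K) ->
  forall G K, wf_graph G -> minor G K -> P G -> P K.
Proof.
move=> stepP G K wG m; elim: m wG => [x y st wx| // | x y z mxy IH1 _ IH2 wx /(IH1 wx)].
  exact: stepP.
exact/IH2/(wf_minor wx).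
Qed.

Definition tree_decomp G (I : finType) (tE : rel I) (B : I -> {set T}) k : Prop :=
  [/\ is_tree tE /\ (forall i, B i \subset gV G),
      forall x, x \in gV G -> exists i, x \in B i,
      forall x y, gE G x y -> exists i, (x \in B i) && (y \in B i),
      forall x i j, x \in B i -> x \in B j ->
         connect [rel a b | [&& tE a b, x \in B a & x \in B b]] i j &
      forall i, #|B i| <= k.+1].

Lemma has_tw_le_mono G k k' : k <= k' -> has_tw_le G k -> has_tw_le G k'.
Proof.
move=> kk' [I [tE [B [tree cover edge conn size]]]].
by exists I, tE, B; split=> // i; apply: leq_trans (size i) _.
Qed.

Lemma has_tw_le_pullback G K (f : T -> T) k : wf_graph K ->
    {in gV K &, injective f} -> {in gV K, forall x, f x \in gV G} ->
    (forall x y, gE K x y -> gE G (f x) (f y)) ->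
  has_tw_le G k -> has_tw_le K k.
Proof.
move=> [_ _ inV] injf fV fE [I [tE [B [[tree _] cover edge conn size]]]].
pose B' i := [set x in gV K | f x \in B i].
exists I, tE, B'; split.
- by split=> // i; apply/subsetP => x; rewrite inE => /andP[].
- by move=> x xV; have [i fxi] := cover _ (fV x xV); exists i; rewrite inE xV.
- move=> x y xy; have /andP[xV yV] := inV _ _ xy.
  have [i /andP[xi yi]] := edge _ _ (fE _ _ xy).
  by exists i; rewrite !inE xV yV xi yi.
- move=> x i j; rewrite !inE => /andP[xV xi] /andP[_ xj].
  apply: connect_mono (conn _ _ _ xi xj) => a b /and3P[ab xa xb].
  by rewrite /= ab !inE xV xa xb.
- move=> i; apply: leq_trans (size i).
  have B'V : {subset B' i <= gV K} by move=> x; rewrite inE => /andP[].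
  rewrite -(card_in_imset (sub_in2 B'V injf)); apply: subset_leq_card.
  by apply/subsetP => _ /imsetP[x + ->]; rewrite inE => /andP[].
Qed.

Lemma has_tw_le_subgraph G K k : wf_graph K ->
  gV K \subset gV G -> subrel (gE K) (gE G) -> has_tw_le G k -> has_tw_le K k.
Proof. by move=> wK /subsetP KG; apply: (has_tw_le_pullback (f := id)). Qed.

Lemma has_tw_le_contract G u v k : wf_graph G -> gE G u v ->
  has_tw_le G k -> has_tw_le (contract G u v) k.
Proof.
move=> [_ irrG inV] uv [I [tE [B [[tree sub] cover edge conn size]]]].
have /andP[_ vV] := inV _ _ uv.
have vu : v != u by apply: contraTneq uv => ->; rewrite irrG.
pose B' i := if u \in B i then v |: (B i :\ u) else B i.
have B'_keep i z : z != u -> z \in B i -> z \in B' i.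
  by rewrite /B' => zu zi; case: ifP => _ //; rewrite !inE zu zi orbT.
have B'_v i : u \in B i -> v \in B' i by rewrite /B' => ->; rewrite setU11.
have B'_neq_u i z : z \in B' i -> z != u.
  rewrite /B'; case: ifP => ui; first by rewrite !inE => /orP[/eqP-> //|/andP[]].
  by apply: contraTneq => ->; rewrite ui.
have B'_old i z : z != v -> z \in B' i -> z \in B i.
  by rewrite /B'; case: ifP => // _ zv; rewrite !inE (negbTE zv) => /andP[].
have B'_vE i : (v \in B' i) = (v \in B i) || (u \in B i).
  by rewrite /B'; case: ifP => ui; rewrite ?setU11 ?orbT ?orbF.
exists I, tE, B'; split.
- split=> // i; apply/subsetP => z zi; rewrite in_setD1 (B'_neq_u _ _ zi) /=.
  have [-> //|zv] := eqVneq z v; exact: subsetP (sub i) _ (B'_old _ _ zv zi).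
- by move=> z /setD1P[zu /cover[i zi]]; exists i; apply: B'_keep.
- move=> a b /and4P[au bu _ /or3P[ab|/andP[/eqP-> ub]|/andP[/eqP-> au']]].
  + by have [i /andP[ai bi]] := edge _ _ ab; exists i; rewrite !B'_keep.
  + by have [i /andP[ui bi]] := edge _ _ ub; exists i; rewrite B'_v // B'_keep.
  + by have [i /andP[ai ui]] := edge _ _ au'; exists i; rewrite B'_v // B'_keep.
- move=> z i j zi zj; have [zv|zv] := eqVneq z v; last first.
    have zu := B'_neq_u _ _ zi.
    apply: connect_mono (conn _ _ _ (B'_old _ _ zv zi) (B'_old _ _ zv zj)).
    by move=> a b /and3P[ab za zb]; rewrite /= ab !B'_keep.
  (* the subtrees of [u] and [v] meet, at a bag containing the edge [uv] *)
  subst z; have [i0 /andP[ui0 vi0]] := edge _ _ uv.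
  have symE : symmetric tE by case: tree.
  move: zi zj; rewrite !B'_vE => vui vuj.
  have := connect_restrictU (P := fun l => v \in B l) (Q := fun l => u \in B l)
    symE vi0 ui0 (conn v) (conn u) vui vuj.
  by apply: connect_mono => a b /=; rewrite !B'_vE.
- move=> i; apply: leq_trans (size i); rewrite /B'; case: ifP => // ui.
  by rewrite cardsU1 (cardsD1 u (B i)) ui add1n; case: (v \notin _).
Qed.

Lemma has_tw_le_minor_step G K k : wf_graph G -> minor_step G K ->
  has_tw_le G k -> has_tw_le K k.
Proof.
move=> wG st; have := wf_minor_step wG st.
case: st => [x _|x y _|u v uv] wK; last exact: has_tw_le_contract.
- by apply: has_tw_le_subgraph => //; [apply: subsetDl | move=> a b /and3P[]].
- by apply: has_tw_le_subgraph => // a b /andP[].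
Qed.

Lemma has_tw_le_minor G K k : wf_graph G -> minor G K ->
  has_tw_le G k -> has_tw_le K k.
Proof.
exact: (minor_closed (P := fun K => has_tw_le K k)
  (fun G K => @has_tw_le_minor_step G K k)).
Qed.

Definition induced G (S : {set T}) : rel T :=
  [rel a b | [&& gE G a b, a \in S & b \in S]].

Lemma connect_induced_sym G S : wf_graph G -> connect_sym (induced G S).
Proof.
case=> symG _ _; apply: sym_connect_sym => a b.
by rewrite /induced /= symG (andbC (a \in S)).
Qed.

Lemma connect_induced_setU G (S1 S2 : {set T}) x0 y0 : wf_graph G ->
    {in S1 &, forall x y, connect (induced G S1) x y} ->
    {in S2 &, forall x y, connect (induced G S2) x y} ->
    x0 \in S1 -> y0 \in S2 -> gE G x0 y0 ->
  {in S1 :|: S2 &, forall x y, connect (induced G (S1 :|: S2)) x y}.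
Proof.
move=> wG conn1 conn2 x0S1 y0S2 x0y0.
have widen (S S' : {set T}) : S \subset S' -> subrel (induced G S) (induced G S').
  by move=> /subsetP SS' a b /and3P[ab aS bS]; rewrite /induced /= ab !SS'.
have to_y0 z : z \in S1 :|: S2 -> connect (induced G (S1 :|: S2)) z y0.
  case/setUP=> [zS1|zS2]; last first.
    exact: connect_mono (widen _ _ (subsetUr _ _)) _ _ (conn2 _ _ zS2 y0S2).
  apply: connect_trans (connect1 _).
    exact: connect_mono (widen _ _ (subsetUl _ _)) _ _ (conn1 _ _ zS1 x0S1).
  by rewrite /induced /= x0y0 !inE x0S1 y0S2 orbT.
by move=> x y xS yS; rewrite (connect_trans (to_y0 _ xS)) // connect_induced_sym // to_y0.
Qed.

Record minor_model G H X : Prop := MinorModel {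
  branch_neq0 : forall h, h \in gV H -> X h != set0;
  branch_sub : forall h, h \in gV H -> X h \subset gV G;
  branch_disjoint : forall h h' x,
    h \in gV H -> h' \in gV H -> x \in X h -> x \in X h' -> h = h';
  branch_connect : forall h, h \in gV H ->
    {in X h &, forall x y, connect (induced G (X h)) x y};
  branch_edge : forall h h', gE H h h' ->
    exists x y, [/\ x \in X h, y \in X h' & gE G x y] }.

Lemma minor_model_id G : minor_model G G (fun h => [set h]).
Proof.
split=> [h _|h hV|h h' x _ _ /set1P-> /set1P //|h _ x y /set1P-> /set1P->|h h' hh'].
- by apply/set0Pn; exists h; rewrite set11.
- by rewrite sub1set.
- by [].
- by exists h, h'; rewrite !set11.
Qed.

Lemma minor_model_subgraph G K K' X : minor_model G K X ->
  gV K' \subset gV K -> subrel (gE K') (gE K) -> minor_model G K' X.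
Proof.
case=> neq0 sub disj conn edge /subsetP K'K E'E.
split=> [h /K'K/neq0 | h /K'K/sub | h h' x /K'K hV /K'K/(disj _ _ x hV) |
         h /K'K/conn | h h' /E'E/edge] //.
Qed.

Lemma minor_model_contract G K X u v : wf_graph G -> wf_graph K ->
    minor_model G K X -> gE K u v ->
  minor_model G (contract K u v) (fun h => if h == v then X v :|: X u else X h).
Proof.
move=> wG [_ irrK inV] [neq0 sub disj conn edge] uv.
have /andP[uV vV] := inV _ _ uv.
set X' := fun h => _.
have X'_keep h z : z \in X h -> z \in X' h.
  by rewrite /X'; case: eqVneq => [-> zv|//]; rewrite inE zv.
have X'_v z : z \in X u -> z \in X' v by rewrite /X' eqxx inE orbC => ->.
have X'E h z : h \in gV K -> z \in X' h -> exists2 h0, h0 \in gV K & z \in X h0 /\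
    (h0 = h \/ h = v /\ h0 = u).
  rewrite /X'; case: eqVneq => [-> _ /setUP[zv|zu]|_ hV zh]; last by exists h; auto.
  + by exists v; auto.
  + by exists u; auto.
split.
- move=> h /setD1P[_ /neq0/set0Pn[z zh]]; apply/set0Pn; exists z; exact: X'_keep.
- move=> h /setD1P[_ hV]; rewrite /X'; case: eqP => _; last exact: sub.
  by rewrite subUset !sub.
- move=> h h' z /setD1P[hu hV] /setD1P[h'u h'V] /(X'E _ _ hV)[h0 h0V [zh0 e0]].
  case/(X'E _ _ h'V)=> h1 h1V [zh1 e1].
  have e01 := disj _ _ _ h0V h1V zh0 zh1; subst h1.
  case: e0 => [e0|[hv e0]]; case: e1 => [e1|[h'v e1]].
  + by rewrite -e0 -e1.
  + by rewrite -e0 e1 eqxx in hu.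
  + by rewrite -e1 e0 eqxx in h'u.
  + by rewrite hv h'v.
- move=> h /setD1P[hu hV]; rewrite /X'; case: eqP => _; last exact: conn.
  have [x0 [y0 [x0u y0v x0y0]]] := edge _ _ uv.
  by rewrite setUC; apply: connect_induced_setU wG (conn _ uV) (conn _ vV) x0u y0v x0y0.
- move=> a b /and4P[au bu _ /or3P[ab|/andP[/eqP-> ub]|/andP[/eqP-> au']]].
  + by have [x [y [xa yb xy]]] := edge _ _ ab; exists x, y; rewrite !X'_keep.
  + by have [x [y [xu yb xy]]] := edge _ _ ub; exists x, y; rewrite X'_v // X'_keep.
  + by have [x [y [xa yu xy]]] := edge _ _ au'; exists x, y; rewrite X'_v // X'_keep.
Qed.

Lemma minor_model_minor G K : wf_graph G -> minor G K -> exists X, minor_model G K X.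
Proof.
move=> wG m; apply: (minor_closed (P := fun K => exists X, minor_model G K X)) m _ => //.
  move=> K1 K2 wK1 [x _|x y _|u v uv] [X mX].
  - by exists X; apply: minor_model_subgraph mX _ _ => [|a b /and3P[]//]; apply: subsetDl.
  - by exists X; apply: minor_model_subgraph mX _ _ => // a b /andP[].
  - by eexists; apply: (minor_model_contract wG wK1 mX uv).
by exists (fun h => [set h]); apply: minor_model_id.
Qed.

Definition edge_sets G : {set {set T}} :=
  [set e | [exists x, exists y, (e == [set x; y]) && gE G x y]].

Lemma edge_setsP G e :
  reflect (exists x y, e = [set x; y] /\ gE G x y) (e \in edge_sets G).
Proof.
rewrite inE; apply: (iffP existsP) => [[x /existsP[y /andP[/eqP-> xy]]]|[x [y [-> xy]]]].
  by exists x, y.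
by exists x; apply/existsP; exists y; rewrite eqxx xy.
Qed.

Definition owner H X x : option T := [pick h | (h \in gV H) && (x \in X h)].

Lemma ownerE G H X h x :
  minor_model G H X -> h \in gV H -> x \in X h -> owner H X x = Some h.
Proof.
move=> mX hV xh; rewrite /owner; case: pickP => [h' /andP[h'V xh']|/(_ h)].
  by rewrite (branch_disjoint mX h'V hV xh' xh).
by rewrite hV xh.
Qed.

Lemma ownerP H X x h : owner H X x = Some h -> h \in gV H /\ x \in X h.
Proof. by rewrite /owner; case: pickP => [h' /andP[? ?] [<-]|]. Qed.

(* Counting: every edge of [H] is the [owner]-image of an edge of [G], so when
   [G] has at most as many edges, no two edges of [G] share an image and none
   is mapped to a non-edge. *)
Lemma owner_edge G H X x y : wf_graph H -> minor_model G H X ->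
    nedges G <= nedges H -> gE G x y ->
  exists h h', [/\ gE H h h', owner H X x = Some h & owner H X y = Some h'].
Proof.
move=> [symH irrH inV] mX leE xy.
pose f (e : {set T}) := owner H X @: e.
pose SE := [set [set Some z | z in e] | e : {set T} in edge_sets H].
have SE_sub : SE \subset f @: edge_sets G.
  apply/subsetP => _ /imsetP[_ /edge_setsP[h [h' [-> hh']]] ->].
  have [x' [y' [x'h y'h' x'y']]] := branch_edge mX hh'.
  have /andP[hV h'V] := inV _ _ hh'.
  apply/imsetP; exists [set x'; y']; first by apply/edge_setsP; exists x', y'.
  by rewrite /f !imsetU1 !imset_set1 (ownerE mX hV x'h) (ownerE mX h'V y'h').
have SE_eq : SE = f @: edge_sets G.
  apply/eqP; rewrite eqEcard SE_sub (card_imset _ (imset_inj (@Some_inj _))).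
  exact: leq_trans (leq_imset_card _ _) leE.
have : f [set x; y] \in SE.
  by rewrite SE_eq imset_f //; apply/edge_setsP; exists x, y.
case/imsetP=> _ /edge_setsP[h [h' [-> hh']]]; rewrite /f !imsetU1 !imset_set1 => E.
have ox : owner H X x \in [set Some h; Some h'] by rewrite -E set21.
have oy : owner H X y \in [set Some h; Some h'] by rewrite -E set22.
have oxy : owner H X x != owner H X y.
  apply/eqP => oxy; move: E; rewrite oxy setUid => E.
  have : Some h' \in [set owner H X y] by rewrite E set22.
  have : Some h \in [set owner H X y] by rewrite E set21.
  by rewrite !inE => /eqP<- /eqP[h'h]; rewrite h'h irrH in hh'.
case/set2P: ox oxy => ->; case/set2P: oy => ->; rewrite ?eqxx // => _.
  by exists h, h'.
by exists h', h; rewrite symH.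
Qed.

Lemma has_tw_le_mindeg3_model G H X j : wf_graph G -> wf_graph H ->
    minor_model G H X -> mindeg_ge3 G -> nedges G <= nedges H ->
  has_tw_le H j -> has_tw_le G j.
Proof.
move=> wG wH mX degG leE; have [_ irrH _] := wH.
have edge := owner_edge wH mX leE.
have owned x : x \in gV G -> exists h, owner H X x = Some h.
  move=> xV; have /card_gt0P[y] : 0 < #|[set u | gE G x u]|.
    exact: leq_trans (degG _ xV).
  by rewrite inE => /edge[h [h' [_ -> _]]]; exists h.
have branch1 h x y : h \in gV H -> x \in X h -> y \in X h -> x = y.
  move=> hV xh yh; apply/eqP/negPn/negP => xy.
  have [z /and3P[xz _ zh] _] := connect_first (branch_connect mX hV xh yh) xy.
  have [h1 [h2 [h12 ox oz]]] := edge _ _ xz.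
  by move: ox oz h12; rewrite !(ownerE mX hV) // => -[<-] [<-]; rewrite irrH.
apply: (has_tw_le_pullback (f := fun x => odflt x (owner H X x))) => //.
- move=> x y /owned[h ox] /owned[h' oy]; rewrite ox oy /= => hh'; subst h'.
  have [hV xh] := ownerP ox; have [_ yh] := ownerP oy.
  exact: branch1 hV xh yh.
- by move=> x /owned[h ox]; rewrite ox; case: (ownerP ox).
- by move=> x y /edge[h [h' [hh' ox oy]]]; rewrite ox oy.
Qed.

Definition suppresses G w G' : Prop :=
  [/\ gV G' = gV G :\ w,
      forall a b, gE G a b -> a != w -> b != w -> gE G' a b &
      forall p q, gE G w p -> gE G w q -> p != q -> gE G' p q].

Lemma minor_step_suppresses G w : wf_graph G -> w \in gV G -> deg G w <= 2 ->
  exists2 G', minor_step G G' & suppresses G w G'.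
Proof.
move=> [symG irrG _] wV; have nbr_neq p : gE G w p -> p != w.
  by move=> wp; apply: contraTneq wp => ->; rewrite irrG.
rewrite /deg leq_eqVlt ltnS => /orP[/eqP deg2|deg1]; last first.
  exists (del_vertex G w); first exact: MS_del_vertex.
  split=> // [a b ab aw bw|p q wp wq pq]; first by rewrite /= ab aw bw.
  have : [set p; q] \subset [set u | gE G w u].
    by apply/subsetP => z; rewrite !inE => /orP[] /eqP->.
  by move/subset_leq_card/leq_trans/(_ deg1); rewrite cards2 pq.
have /set0Pn[a] : [set u | gE G w u] != set0 by rewrite -card_gt0 deg2.
rewrite inE => wa; exists (contract G w a); first exact: MS_contract.
split=> // [x y xy xw yw|p q wp wq pq].
  by rewrite /= xw yw xy andbT; apply: contraTneq xy => ->; rewrite irrG.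
rewrite /= (nbr_neq _ wp) (nbr_neq _ wq) pq /=.
have [pa|pa] := eqVneq p a; first by rewrite wq orbT.
have [qa|qa] := eqVneq q a; first by rewrite (symG p w) wp !orbT.
(* [w] has only two neighbours, so [p], [q], [a] cannot be distinct *)
have : [set a; p; q] \subset [set u | gE G w u].
  by apply/subsetP => z; rewrite !inE => /orP[/orP[]|] /eqP->.
move/subset_leq_card; rewrite deg2 -setUA cardsU1 cards2 pq !inE.
by rewrite eq_sym (negbTE pa) eq_sym (negbTE qa).
Qed.

Lemma deg_le_branch_sub1 G H X h w : wf_graph H -> minor_model G H X ->
  h \in gV H -> X h \subset [set w] -> deg H h <= deg G w.
Proof.
move=> [_ _ inV] mX hV /subsetP Xh_w.
rewrite /deg -(card_imset _ (@Some_inj _)).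
apply: leq_trans (leq_imset_card (owner H X) _); apply: subset_leq_card.
apply/subsetP => _ /imsetP[h' /[!inE] hh' ->].
have [x [y [xh yh' xy]]] := branch_edge mX hh'; have /andP[_ h'V] := inV _ _ hh'.
apply/imsetP; exists y; last by rewrite (ownerE mX h'V yh').
by have /set1P <- := Xh_w _ xh; rewrite inE.
Qed.

Lemma connect_induced_suppresses G G' w (S : {set T}) x y :
    wf_graph G -> suppresses G w G' ->
    (w \in S -> exists2 c, c \in S :\ w & gE G w c) -> x != w -> y != w ->
  connect (induced G S) x y -> connect (induced G' (S :\ w)) x y.
Proof.
move=> [symG irrG _] [_ EG' NG'] nbr xw yw.
have lift a b : induced G S a b -> a != w -> b != w -> induced G' (S :\ w) a b.
  by case/and3P=> ab aS bS aw bw; rewrite /induced /= EG' // !in_setD1 aw bw aS bS.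
have [wS|wNS] := boolP (w \in S); last first.
  apply: connect_mono => a b ab; case/and3P: (ab) => _ aS bS.
  by apply: lift => //; [apply: contraTneq aS | apply: contraTneq bS] => ->.
(* a walk through [w] is rerouted through a neighbour [c] of [w]: the
   neighbours of [w] are pairwise adjacent in [G'] *)
have [c /setD1P[cw cS] wc] := nbr wS.
have nbrs p q : p \in S -> q \in S -> gE G w p -> gE G w q ->
    connect (induced G' (S :\ w)) p q.
  move=> pS qS wp wq; have [-> //|pq] := eqVneq p q.
  have pw : p != w by apply: contraTneq wp => ->; rewrite irrG.
  have qw : q != w by apply: contraTneq wq => ->; rewrite irrG.
  by apply: connect1; rewrite /induced /= NG' // !in_setD1 pw qw pS qS.
move=> /(connect_homo (f := fun z => if z == w then c else z)).
rewrite (negbTE xw) (negbTE yw); apply=> a b /[dup] iab /and3P[ab aS bS].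
have [aw|aw] := eqVneq a w; have [bw|bw] := eqVneq b w => //.
- by apply: nbrs => //; rewrite -aw.
- by apply: nbrs => //; rewrite -bw symG.
- exact/connect1/lift.
Qed.

Lemma minor_model_suppresses G G' H X w : wf_graph G -> wf_graph H ->
    minor_model G H X -> mindeg_ge3 H -> deg G w <= 2 -> suppresses G w G' ->
  minor_model G' H (fun h => X h :\ w).
Proof.
move=> wG wH mX degH degw supp.
have [symG irrG _] := wG; have [symH irrH inVH] := wH; have [VG' EG' NG'] := supp.
have neq0 h : h \in gV H -> X h :\ w != set0.
  move=> hV; apply: contraTneq (degH _ hV) => Xh_w; rewrite -ltnNge ltnS.
  by apply: leq_trans degw; apply: deg_le_branch_sub1 wH mX hV _; rewrite -setD_eq0 Xh_w.
have nbr h : h \in gV H -> w \in X h -> exists2 c, c \in X h :\ w & gE G w c.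
  move=> hV wh; have /set0Pn[z /setD1P[zw zh]] := neq0 _ hV.
  have [|c /and3P[wc _ ch] _] := connect_first (branch_connect mX hV wh zh).
    by rewrite eq_sym.
  by exists c; rewrite // in_setD1 ch andbT; apply: contraTneq wc => ->; rewrite irrG.
have sep h h' a : gE H h h' -> a \in X h -> a \notin X h'.
  move=> hh' ah; apply/negP => ah'; have /andP[hV h'V] := inVH _ _ hh'.
  by move: hh'; rewrite (branch_disjoint mX hV h'V ah ah') irrH.
split.
- exact: neq0.
- by move=> h hV; rewrite VG' setSD // (branch_sub mX hV).
- move=> h h' x hV h'V /setD1P[_ xh] /setD1P[_ xh'].
  exact: (branch_disjoint mX hV h'V xh xh').
- move=> h hV x y /setD1P[xw xh] /setD1P[yw yh].
  exact: (connect_induced_suppresses wG supp (nbr h hV) xw yw (branch_connect mX hV xh yh)).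
- move=> h h' hh'; have [x [y [xh yh' xy]]] := branch_edge mX hh'.
  have /andP[hV h'V] := inVH _ _ hh'.
  have [xw|xw] := eqVneq x w.
    subst x; have [c /setD1P[cw ch] wc] := nbr _ hV xh.
    have yw : y != w by apply: contraTneq yh' => ->; apply: sep hh' xh.
    have cy : c != y by apply: contraTneq yh' => <-; apply: sep hh' ch.
    by exists c, y; rewrite !in_setD1 cw yw ch yh' NG'.
  have [yw|yw] := eqVneq y w.
    subst y; have [c /setD1P[cw ch] wc] := nbr _ h'V yh'.
    have xc : x != c by apply: contraTneq xh => ->; rewrite symH in hh'; apply: sep hh' ch.
    by exists x, c; rewrite !in_setD1 cw xw ch xh NG' // symG.
  by exists x, y; rewrite !in_setD1 xw yw xh yh' EG'.
Qed.

Definition leaf_bags (I : finType) (B : I -> {set T}) (S : {set T}) (o : option I) :=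
  if o is Some i then B i else S.

Lemma leaf_bags_connect (I : finType) (tE : rel I) (B : I -> {set T}) i0 S x :
    symmetric tE ->
    (forall i j, x \in B i -> x \in B j ->
       connect [rel a b | [&& tE a b, x \in B a & x \in B b]] i j) ->
    (forall i, S :&: B i \subset B i0) ->
  forall o o', x \in leaf_bags B S o -> x \in leaf_bags B S o' ->
  connect [rel a b | [&& add_leaf tE i0 a b, x \in leaf_bags B S a
                       & x \in leaf_bags B S b]] o o'.
Proof.
move=> symE conn SB; set R := [rel a b | _].
have symR : connect_sym R.
  apply: sym_connect_sym => a b /=; rewrite (andbC (x \in leaf_bags B S a)).
  by case: a b => [i|] [j|] //=; rewrite symE.
have lift i j : x \in B i -> x \in B j -> connect R (Some i) (Some j).
  by move=> xi xj; apply: connect_homo (conn _ _ xi xj) => a b ab; apply: connect1.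
have [xS|xNS] := boolP (x \in S); last first.
  have inB o : x \in leaf_bags B S o -> exists2 i, o = Some i & x \in B i.
    by case: o => [i|] /= xo; [exists i | move: xNS; rewrite xo].
  by move=> o o' /inB[i -> xi] /inB[j -> xj]; apply: lift.
have to_leaf o : x \in leaf_bags B S o -> connect R o None.
  case: o => [i|] //= xi.
  have xi0 : x \in B i0 by apply: subsetP (SB i) _ _; rewrite inE xS xi.
  by apply: connect_trans (lift _ _ xi xi0) (connect1 _); rewrite /= eqxx xi0.
by move=> o o' xo xo'; rewrite (connect_trans (to_leaf _ xo)) // symR to_leaf.
Qed.

Lemma neighbours_in_bag G G' w (I : finType) (tE : rel I) B m :
    wf_graph G -> deg G w <= 2 -> suppresses G w G' -> tree_decomp G' tE B m ->
  exists i, [set u | gE G w u] \subset B i.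
Proof.
move=> [_ irrG inV] degw [VG' _ NG'] [[tree _] cover edge _ _].
move: degw; rewrite /deg; set N := [set u | _].
rewrite leq_eqVlt ltnS leq_eqVlt ltnS leqn0.
case/or3P=> [/cards2P[a [b [ab eN]]]|/cards1P[a eN]|/eqP/cards0_eq ->].
- have wa : gE G w a by move: (set21 a b); rewrite -eN inE.
  have wb : gE G w b by move: (set22 a b); rewrite -eN inE.
  have [i /andP[ai bi]] := edge _ _ (NG' _ _ wa wb ab).
  by exists i; rewrite eN subUset !sub1set ai bi.
- have wa : gE G w a by move: (set11 a); rewrite -eN inE.
  have aV : a \in gV G'.
    rewrite VG' in_setD1 (proj2 (andP (inV _ _ wa))) andbT.
    by apply: contraTneq wa => ->; rewrite irrG.
  by have [i ai] := cover _ aV; exists i; rewrite eN sub1set.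
- by case: tree => _ _ /card_gt0P[i _] _ _; exists i; rewrite sub0set.
Qed.

Lemma has_tw_le_unsuppress G G' w m : wf_graph G -> w \in gV G -> deg G w <= 2 ->
  suppresses G w G' -> 2 <= m -> has_tw_le G' m -> has_tw_le G m.
Proof.
move=> wG wV degw supp m2 [I [tE [B dec]]].
have [i0 Ni0] := neighbours_in_bag wG degw supp dec.
case: wG supp dec => symG _ inV [VG' EG' _] [[tree sub] cover edge conn size].
set N := [set u | _] in Ni0.
have B_neq_w i x : x \in B i -> x != w.
  by move/(subsetP (sub i)); rewrite VG' => /setD1P[].
exists (option I), (add_leaf tE i0), (leaf_bags B (w |: N)); split.
- split=> [|[i|] /=]; first exact: is_tree_add_leaf.
    by rewrite (subset_trans (sub i)) // VG' subsetDl.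
  rewrite subUset sub1set wV; apply/subsetP => u; rewrite inE => /inV/andP[_ //].
- move=> x xV; have [->|xw] := eqVneq x w; first by exists None; rewrite /= setU11.
  have [i xi] : exists i, x \in B i by apply: cover; rewrite VG' in_setD1 xw.
  by exists (Some i).
- move=> x y xy; have [xw|xw] := eqVneq x w.
    by subst x; exists None; rewrite /= !inE eqxx xy orbT.
  have [yw|yw] := eqVneq y w.
    by subst y; exists None; rewrite /= !inE eqxx (symG w x) xy !orbT.
  have [i /andP[xi yi]] := edge _ _ (EG' _ _ xy xw yw).
  by exists (Some i); rewrite /= xi yi.
- move=> x; apply: leaf_bags_connect; [by case: tree | exact: conn |].
  move=> i; apply/subsetP => z /setIP[/setU1P[-> /B_neq_w|zN _]]; first by rewrite eqxx.
  exact: subsetP Ni0 _ zN.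
- case=> [i|] /=; first exact: size.
  by rewrite cardsU1 (leq_trans (leq_add (leq_b1 _) degw)) // add1n ltnS.
Qed.

Lemma has_tw_le_maximal_model G H X j : wf_graph G -> wf_graph H ->
    minor_model G H X -> mindeg_ge3 H ->
    (forall K, minor G K -> mindeg_ge3 K -> nedges K <= nedges H) ->
  has_tw_le H j -> has_tw_le G (maxn j 2).
Proof.
move=> + wH + degH + twH; have [n] := ubnP #|gV G|.
elim: n => // n IHn in G X *; rewrite ltnS => sizeG wG mX maxH.
have [w /andP[wV degw]|high] := pickP [pred w | (w \in gV G) && (deg G w <= 2)].
  have [G' step supp] := minor_step_suppresses wG wV degw.
  have sizeG' : #|gV G'| < n by case: supp sizeG => -> _ _; rewrite (cardsD1 w) wV.
  have mX' := minor_model_suppresses wG wH mX degH degw supp.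
  apply: (has_tw_le_unsuppress wG wV degw supp (leq_maxr _ _)).
  apply: IHn sizeG' (wf_minor_step wG step) mX' _.
  by move=> K mK; apply: maxH; apply: rt_trans (rt_step _ _ _ _ step) mK.
have degG : mindeg_ge3 G by move=> v vV; move: (high v); rewrite /= vV ltnNge => /negbT.
apply: has_tw_le_mono (leq_maxl j 2) _.
exact: has_tw_le_mindeg3_model wG wH mX degG (maxH _ (rt_refl _ _ _) degG) twH.
Qed.

End Graphs.

Theorem theorem23 (T : finType) (G H : graph T) (k : nat) :
  wf_graph G -> treewidth G k -> 3 <= k -> minor3core G H -> treewidth H k.
Proof.
move=> wG [twG minG] k3 [mGH degH maxH]; have wH := wf_minor wG mGH.
split=> [|j twH]; first exact: has_tw_le_minor wG mGH twG.
have [X mX] := minor_model_minor wG mGH.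
have := minG _ (has_tw_le_maximal_model wG wH mX degH maxH twH).
by rewrite leq_max => /orP[// | /(leq_trans k3)].
Qed.
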